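(* Let $S$ be a monoid in which the unique maximal right ideal $\mathfrak{M}$ is two-sided. Let $A$ be a right $S$-act and $B$ a maximal subact of $A$ such that there exists $a\in A\setminus B$ with $\mathfrak{M}=\{s\in S\mid as\in B\}$. Then for every proper right ideal $I$ of $S$ we have $AI\neq A$.
   Context: $S$ is a monoid with identity $1$ having at least one right non-invertible element. A (right) $S$-act is a nonempty set $A$ with an action $(a,s)\mapsto as$ satisfying $a1=a$, $a(st)=(as)t$. A subact is a nonempty subset closed under the action; a maximal subact is a proper subact not properly contained in another proper subact. $\mathfrak{M}=\{s\in S\mid st\neq1\ \forall t\in S\}$ is the unique maximal right ideal of $S$, containing every proper right ideal. For a right ideal $I$, $AI=\{as\mid a\in A, s\in I\}$. *)

Definition is_monoid {S : Type} (mul : S -> S -> S) (one : S) : Prop :=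
  (forall x y z, mul x (mul y z) = mul (mul x y) z) /\
  (forall x, mul one x = x) /\ (forall x, mul x one = x).

Definition is_right_act {S A : Type} (mul : S -> S -> S) (one : S)
  (act : A -> S -> A) : Prop :=
  (forall a, act a one = a) /\
  (forall a s t, act a (mul s t) = act (act a s) t).

Definition is_subact {S A : Type} (act : A -> S -> A) (B : A -> Prop) : Prop :=
  (exists b, B b) /\ (forall b s, B b -> B (act b s)).

Definition proper {T : Type} (X : T -> Prop) : Prop := exists x, ~ X x.

Definition is_maximal_subact {S A : Type} (act : A -> S -> A) (B : A -> Prop) : Prop :=
  is_subact act B /\ proper B /\
  forall C : A -> Prop, is_subact act C -> proper C ->
    (forall x, B x -> C x) -> forall x, C x -> B x.

Definition is_right_ideal {S : Type} (mul : S -> S -> S) (I : S -> Prop) : Prop :=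
  (exists s, I s) /\ (forall s t, I s -> I (mul s t)).

Definition frakM {S : Type} (mul : S -> S -> S) (one : S) : S -> Prop :=
  fun s => forall t, mul s t <> one.

Definition actI {S A : Type} (act : A -> S -> A) (I : S -> Prop) : A -> Prop :=
  fun x => exists a s, I s /\ x = act a s.


(* The subact B ∪ aS strictly contains B, so by maximality it is all of A.
   Writing a = b m with m in a proper right ideal I ⊆ 𝔐, either b ∈ B, or
   b = a s and then a = a (s m) with s m ∈ 𝔐 since 𝔐 is two-sided; in both
   cases a ∈ B, which is absurd. *)

Lemma right_ideal_proper_sub_frakM {S : Type} (mul : S -> S -> S) (one : S)
  (I : S -> Prop) :
  is_monoid mul one -> is_right_ideal mul I -> proper I ->
  forall s, I s -> frakM mul one s.
Proof.
  intros [Hassoc [Hone_l _]] [_ HIclosed] [y Hy] s Hs t Hst.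
  apply Hy.
  replace y with (mul s (mul t y)) by (rewrite Hassoc, Hst; apply Hone_l).
  now apply HIclosed.
Qed.

Definition union_cyclic {S A : Type} (act : A -> S -> A) (B : A -> Prop) (a : A) :
  A -> Prop :=
  fun x => B x \/ exists s, x = act a s.

Lemma union_cyclic_subact {S A : Type} (mul : S -> S -> S) (one : S)
  (act : A -> S -> A) (B : A -> Prop) (a : A) :
  is_right_act mul one act -> (forall b s, B b -> B (act b s)) ->
  is_subact act (union_cyclic act B a).
Proof.
  intros [Hact_one Hact_mul] HBclosed. split.
  - exists a. right. exists one. now rewrite Hact_one.
  - intros x s [Hx | [u ->]].
    + left. now apply HBclosed.
    + right. exists (mul u s). now rewrite Hact_mul.
Qed.

Lemma maximal_subact_strict_superset_not_proper {S A : Type} (act : A -> S -> A)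
  (B C : A -> Prop) :
  is_maximal_subact act B -> is_subact act C ->
  (forall x, B x -> C x) -> (exists x, C x /\ ~ B x) -> ~ proper C.
Proof.
  intros [_ [_ Hmax]] HC HBC [x [HCx HBx]] HCproper.
  exact (HBx (Hmax C HC HCproper HBC x HCx)).
Qed.

Theorem theorem2p4 (S A : Type) (mul : S -> S -> S) (one : S)
  (act : A -> S -> A)
  (HS : is_monoid mul one)
  (Hnoninv : exists s, frakM mul one s)
  (HA : is_right_act mul one act)
  (Htwo : forall s m, frakM mul one m -> frakM mul one (mul s m))
  (B : A -> Prop) (HB : is_maximal_subact act B)
  (a : A) (HaB : ~ B a)
  (HM : forall s, frakM mul one s <-> B (act a s)) :
  forall I : S -> Prop, is_right_ideal mul I -> proper I ->
    ~ (forall x : A, actI act I x).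
Proof.
  intros I HI HIproper Hcover.
  pose proof HA as [Hact_one Hact_mul].
  pose proof HB as [[_ HBclosed] _].
  destruct (Hcover a) as [b [m [Hm Ha]]].
  assert (Hunion_full : ~ proper (union_cyclic act B a)).
  { apply (maximal_subact_strict_superset_not_proper act B); [exact HB | ..].
    - now apply (union_cyclic_subact mul one).
    - intros x Hx. now left.
    - exists a. split; [right; exists one; now rewrite Hact_one | exact HaB]. }
  apply Hunion_full. exists b. intros [Hb | [s Hs]].
  - apply HaB. rewrite Ha. now apply HBclosed.
  - apply HaB. rewrite Ha, Hs, <- Hact_mul. apply HM, Htwo.
    exact (right_ideal_proper_sub_frakM mul one I HS HI HIproper m Hm).
Qed.
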